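(* Let $G$ be a Cayley graph of a finite group $\Gamma$ that is nilpotent of class $\le n$, and let $r\ge 2^{n+1}$. If $G$ has an $r$-local cutvertex, then $G$ is a cycle of length greater than $r$ and $\Gamma$ is cyclic.
   Context: A generating set $S$ does not contain the neutral element $\mathbb{I}$ and is closed under inverses; the Cayley graph $\mathrm{Cay}(\Gamma,S)$ is the simple graph on $\Gamma$ with edges $\{g,gs\}$, $g\in\Gamma$, $s\in S$. $a\equiv b$ means $a=b$ or $a=b^{-1}$. Iterated commutators: $[g,h]_1:=gh^{-1}g^{-1}h$, $[g,h]_n$ the reduced form of $g[g,h]_{n-1}^{-1}g^{-1}[g,h]_{n-1}$; $\Gamma$ is nilpotent of class $\le n$ if $[g,h]_n=\mathbb{I}$ for all $g\not\equiv h$ in $\Gamma$. The ball $B_r(v)$ around a vertex $v$ is the subgraph consisting of all vertices and edges on closed walks of length at most $r$ through $v$; $v$ is an $r$-local cutvertex if $B_r(v)-v$ is disconnected. *)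

From mathcomp Require Import all_boot all_fingroup all_solvable.
From Stdlib Require Import Relations.
Set Implicit Arguments. Unset Strict Implicit. Unset Printing Implicit Defensive.
Local Open Scope group_scope.

Section Defs.
Variable gT : finGroupType.

Definition generating_set (S : {set gT}) : Prop :=
  [/\ 1 \notin S, (forall s, s \in S -> s^-1 \in S) & <<S>> = [set: gT]].

Definition cay (S : {set gT}) : rel gT :=
  fun g h => (g != h) && (g^-1 * h \in S).

(* Iterated commutators: icomm g h 0 = h, so icomm g h 1 = g h^-1 g^-1 h
   = [g,h]_1, and icomm g h k.+1 = g c^-1 g^-1 c with c = icomm g h k. *)
Fixpoint icomm (g h : gT) (k : nat) : gT :=
  match k with
  | 0 => h
  | k'.+1 => let c := icomm g h k' in g * c^-1 * g^-1 * c
  end.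

Definition nil_class_le (n : nat) : Prop :=
  forall g h : gT, g != h -> g != h^-1 -> icomm g h n = 1.

Definition closed_walk (S : {set gT}) (r : nat) (v : gT) (p : seq gT) : bool :=
  [&& path (cay S) v p, last v p == v & size p <= r].

Definition ball_vertex S r v x : Prop :=
  exists p, closed_walk S r v p /\ x \in v :: p.

Definition ball_edge S r v x y : Prop :=
  exists p, closed_walk S r v p /\
    exists p1 p2, v :: p = p1 ++ x :: y :: p2 \/ v :: p = p1 ++ y :: x :: p2.

Definition ball_minus_edge S r v x y : Prop :=
  x != v /\ y != v /\ ball_edge S r v x y.

Definition local_cutvertex S r v : Prop :=
  exists x y, [/\ ball_vertex S r v x, x != v, ball_vertex S r v y, y != v &
    ~ clos_refl_trans gT (ball_minus_edge S r v) x y].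

Definition cay_is_cycle (S : {set gT}) : Prop :=
  (forall x y, connect (cay S) x y) /\ (forall x, #|[set y | cay S x y]| = 2).
End Defs.

(* If S contains generators s, t with s <> t and s <> t^-1, let m <= n be least
   with [s,t]_m = 1. The word of [s,t]_m has length 2^(m+1) <= r, so it traces a
   closed walk through v inside B_r(v). A shortest cycle inside this walk has
   length at least 4 (a shorter relator would make s and t commute, forcing
   m = 1), and along it every interior vertex has its two cycle-neighbours joined
   by the rest of the cycle in its own punctured ball. Translating to v, each such
   turn joins two neighbours v a, v b of v in B_r(v) - v; the signs of the word
   never alternate over four consecutive letters, so three consecutive turns
   chain into a path from v s to v t^-1. Hence all neighbours of v, and then all
   of B_r(v) - v, are connected. Otherwise S = {a, a^-1}, so the group is the
   cyclic group <a>, the Cayley graph is a cycle, and it must be longer than r,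
   since otherwise it lies in B_r(v) and B_r(v) - v is a path. *)

From mathcomp Require Import all_boot all_fingroup all_solvable.
From Stdlib Require Import Relations Lia.
From mathcomp Require Import zify.
Set Implicit Arguments. Unset Strict Implicit. Unset Printing Implicit Defensive.

Section BallConnectivity.
Local Open Scope group_scope.
Variables (gT : finGroupType) (S : {set gT}) (r : nat).
Implicit Types (g v w x y z : gT).

Definition ball_conn v : relation gT := clos_refl_trans gT (ball_minus_edge S r v).

Lemma ball_edge_sym v x y : ball_edge S r v x y -> ball_edge S r v y x.
Proof. by case=> p [wp [p1 [p2 e]]]; exists p; split=> //; exists p1, p2; tauto. Qed.

Lemma ball_conn_sym v x y : ball_conn v x y -> ball_conn v y x.
Proof.
elim=> [{}x {}y [xv [yv e]] | {}x | x1 x2 x3 _ c21 _ c32].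
- by apply: rt_step; do 2!split=> //; apply: ball_edge_sym.
- exact: rt_refl.
- exact: rt_trans c32 c21.
Qed.

Lemma ball_conn_trans v x y z : ball_conn v x y -> ball_conn v y z -> ball_conn v x z.
Proof. exact: rt_trans. Qed.

Lemma cay_mull g x y : cay S (g * x) (g * y) = cay S x y.
Proof. by rewrite /cay (inj_eq (mulgI g)) invMg -mulgA mulKg. Qed.

Lemma path_mull g x p : path (cay S) (g * x) (map (fun y => g * y) p) = path (cay S) x p.
Proof. by elim: p x => //= y p IHp x; rewrite cay_mull IHp. Qed.

Lemma ball_edge_mull g v x y :
  ball_edge S r v x y -> ball_edge S r (g * v) (g * x) (g * y).
Proof.
case=> p [/and3P [pp /eqP lp sp] [p1 [p2 e]]].
exists (map (fun y => g * y) p); split.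
  by apply/and3P; rewrite path_mull last_map lp size_map eqxx.
by exists (map (fun y => g * y) p1), (map (fun y => g * y) p2); rewrite -map_cons; case: e => ->;
  [left | right]; rewrite map_cat.
Qed.

Lemma ball_conn_mull g v x y : ball_conn v x y -> ball_conn (g * v) (g * x) (g * y).
Proof.
elim=> [{}x {}y [xv [yv e]] | {}x | x1 x2 x3 _ c12 _ c23].
- by apply: rt_step; rewrite /ball_minus_edge !(inj_eq (mulgI g)); split=> //;
    split=> //; apply: ball_edge_mull.
- exact: rt_refl.
- exact: rt_trans c12 c23.
Qed.

Lemma ball_conn_shift v w (a b : gT) : ball_conn v (v * a) (v * b) -> ball_conn w (w * a) (w * b).
Proof. by move/(ball_conn_mull (w * v^-1)); rewrite !mulgA !mulgKV. Qed.

Definition walkf L (x : nat -> gT) := forall k, k < L -> cay S (x k) (x k.+1).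

Section ClosedWalk.
Variables (L : nat) (x : nat -> gT).
Hypotheses (wx : walkf L x) (xL : x L = x 0) (Lr : L <= r).

Lemma closed_walk_mkseq : closed_walk S r (x 0) (mkseq (fun k => x k.+1) L).
Proof.
apply/and3P; split; last by rewrite size_mkseq.
- apply/(pathP (x 0)) => k; rewrite size_mkseq => kL.
  by rewrite nth_mkseq //; case: k kL => [|k] kL /=; rewrite ?nth_mkseq ?wx // ltnW.
- have [-> // | L0] := posnP L.
  by rewrite (last_nth (x 0)) size_mkseq -(prednK L0) /= nth_mkseq // prednK // xL.
Qed.

Lemma ball_edge_walkf k : k < L -> ball_edge S r (x 0) (x k) (x k.+1).
Proof.
move=> kL; exists (mkseq (fun k => x k.+1) L); split; first exact: closed_walk_mkseq.
have -> : x 0 :: mkseq (fun k => x k.+1) L = mkseq x L.+1.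
  by rewrite /mkseq /= (iotaDl 1 0) -map_comp.
exists (take k (mkseq x L.+1)), (drop k.+2 (mkseq x L.+1)); left.
rewrite -{1}(cat_take_drop k (mkseq x L.+1)) (drop_nth (x 0)) ?(drop_nth (x 0) (n := k.+1));
  by rewrite ?size_mkseq ?nth_mkseq // ltnW.
Qed.

Lemma ball_conn_walkf a b : a <= b <= L -> (forall k, a <= k <= b -> x k != x 0) ->
  ball_conn (x 0) (x a) (x b).
Proof.
elim: b => [|b IHb] /andP [ab bL] xk.
  by rewrite leqn0 in ab; rewrite (eqP ab); apply: rt_refl.
case: (ltngtP a b.+1) ab => // [ab | <-] _; last exact: rt_refl.
rewrite ltnS in ab; have bL' : b < L := bL.
apply: ball_conn_trans (IHb _ _) _; first by rewrite ab ltnW.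
  by move=> k /andP [ak kb]; rewrite xk // ak leqW.
apply: rt_step; split; first by rewrite xk // ab leqW.
by split; [rewrite xk // leqnn andbT ltnW | apply: ball_edge_walkf].
Qed.

End ClosedWalk.

Lemma walkf_nth v p : path (cay S) v p -> walkf (size p) (nth v (v :: p)).
Proof. by move=> /(pathP v) pp k /pp. Qed.

Lemma ball_vertex_conn_neighbour v z : ball_vertex S r v z -> z != v ->
  exists2 a, a \in S & ball_conn v (v * a) z.
Proof.
case=> p [/and3P [pp /eqP lp sp] zp] zv.
have wx := walkf_nth pp; set x := nth v (v :: p) in wx *.
have xL : x (size p) = x 0 by rewrite /x -last_nth lp.
have [q [q0 qL xq]] : exists q, [/\ 0 < q, q <= size p & x q = z].
  move: zp; rewrite inE (negbTE zv) => zp.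
  by exists (index z p).+1; rewrite /x /= nth_index ?index_mem.
rewrite -{}xq in zv *.
elim: q q0 qL zv => // q IHq _ qL xqv.
case: (eqVneq (x q) v) => [xq | xqv'].
  exists (v^-1 * x q.+1); last by rewrite mulKVg; apply: rt_refl.
  by have /andP [] := wx q qL; rewrite xq.
have q0 : 0 < q by case: q {IHq qL xqv} xqv' => //; rewrite eqxx.
have [a aS c] := IHq q0 (ltnW qL) xqv'.
exists a => //; apply: ball_conn_trans c _; apply: rt_step.
by split=> //; split=> //; apply: (ball_edge_walkf wx xL sp qL).
Qed.

(* Rotating the cycle [y] to start at [y c] gives a closed walk of the ball
   of [y c] that visits [y c] only at its ends. *)
Lemma cycle_turn_conn d (y : nat -> gT) : walkf d y -> y d = y 0 -> d <= r ->
    (forall p q, p < q <= d -> q - p < d -> y p != y q) ->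
  forall c, 0 < c < d -> ball_conn (y c) (y c.-1) (y c.+1).
Proof.
move=> wy yd dr yinj c /andP [c0 cd].
pose z l := if c + l <= d then y (c + l) else y (c + l - d).
have z0 : z 0 = y c by rewrite /z addn0 ltnW.
have zd : z d = z 0 by rewrite z0 /z ifF; [congr y | apply/negbTE]; lia.
have wz : walkf d z.
  move=> l ld; rewrite /z /= addnS; case: (ltngtP (c + l) d) => cld.
  - exact: wy.
  - by rewrite subSn ?(ltnW cld) //; apply: wy; lia.
  - by rewrite cld subSnn yd; apply: wy; lia.
have zc l : 0 < l < d -> z l != y c.
  move=> /andP [l0 ld]; rewrite /z /=; case: ifP => cld.
  - by rewrite eq_sym; apply: yinj; lia.
  - by apply: yinj; lia.
have z1 : z 1%N = y c.+1 by rewrite /z /= addn1 cd.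
have zd1 : z d.-1 = y c.-1.
  rewrite /z /=; case: ifP => cd'; last by congr y; lia.
  have -> : c + d.-1 = d by lia.
  by rewrite yd; congr y; lia.
rewrite -z1 -zd1 -z0; apply: ball_conn_sym; apply: (ball_conn_walkf wz zd dr); first lia.
by move=> l ?; rewrite z0 zc //; lia.
Qed.

End BallConnectivity.

Lemma min_repeat_window (T : eqType) L (x : nat -> T) : 0 < L -> x L = x 0 ->
  exists i d, [/\ 0 < d, i + d <= L, x (i + d) = x i &
    forall p q, p < q <= d -> q - p < d -> x (i + p) != x (i + q)].
Proof.
move=> L0 xL.
pose P d := [exists i : 'I_L.+1, [&& 0 < d, i + d <= L & x (i + d) == x i]].
have [|d /existsP [i /and3P [d0 idL /eqP xid]] dmin] := ex_minnP (P := P).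
  by exists L; apply/existsP; exists ord0; rewrite L0 add0n leqnn xL eqxx.
exists i, d; split=> // p q /andP [pq qd] qpd; apply/eqP => xpq.
have ipL : i + p < L.+1 by lia.
have /dmin : P (q - p).
  apply/existsP; exists (Ordinal ipL); rewrite /= subn_gt0 pq.
  have -> : i + p + (q - p) = i + q by lia.
  by rewrite xpq eqxx andbT; lia.
by rewrite leqNgt qpd.
Qed.

Definition letter_inv (l : bool * bool) := (l.1, ~~ l.2).

(* [comm_word k] spells [[s, t]_(k+1)] with letters (is [t], is positive); the
   recursion [s c^-1 s^-1 c] cancels [s^-1 s] because [c] starts with [s]. *)
Fixpoint comm_word k : seq (bool * bool) :=
  if k is k'.+1 then
    (false, true) :: rev (map letter_inv (comm_word k')) ++ behead (comm_word k')
  else [:: (false, true); (true, false); (false, false); (true, true)].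

Lemma comm_word_cons k : comm_word k = (false, true) :: behead (comm_word k).
Proof. by case: k. Qed.

Lemma size_comm_word k : size (comm_word k) = 2 ^ k.+2.
Proof.
elim: k => // k IHk; rewrite /= size_cat size_rev size_map size_behead IHk.
by rewrite [in RHS]expnS; have := expn_gt0 2 k.+2; lia.
Qed.

Lemma size_comm_word_succ k : size (comm_word k.+1) = 2 * size (comm_word k).
Proof. by rewrite !size_comm_word [in LHS]expnS. Qed.

Lemma size_comm_word_ge4 k : 4 <= size (comm_word k).
Proof. by rewrite size_comm_word !expnS; have := expn_gt0 2 k; lia. Qed.

Lemma odd_size_comm_word k : odd (size (comm_word k)) = false.
Proof. by rewrite size_comm_word expnS oddM. Qed.

Lemma nth_comm_word_succ l0 k q : let L := size (comm_word k) in 0 < q < 2 * L ->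
  nth l0 (comm_word k.+1) q =
  if q <= L then letter_inv (nth l0 (comm_word k) (L - q))
  else nth l0 (comm_word k) (q - L).
Proof.
case: q => // q /= qL; rewrite nth_cat size_rev size_map.
case: ifPn => qk.
  by rewrite nth_rev ?size_map // (nth_map l0) //; lia.
by rewrite nth_behead; congr nth; lia.
Qed.

Lemma comm_word_type l0 k q : q < size (comm_word k) -> (nth l0 (comm_word k) q).1 = odd q.
Proof.
elim: k q => [|k IHk] q qL; first by case: q qL => [|[|[|[|q]]]].
rewrite size_comm_word_succ in qL; case: (posnP q) => [-> // | q0].
have L4 := size_comm_word_ge4 k; have Le := odd_size_comm_word k.
rewrite nth_comm_word_succ ?q0 //; case: ifPn => qk; rewrite /= IHk ?oddB ?Le //; lia.
Qed.

Definition comm_sign k q := (nth (false, true) (comm_word k) q).2.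

Lemma comm_sign_succ k q : let L := size (comm_word k) in 0 < q < 2 * L ->
  comm_sign k.+1 q = if q <= L then ~~ comm_sign k (L - q) else comm_sign k (q - L).
Proof. by move=> L qL; rewrite /comm_sign nth_comm_word_succ //; case: ifP. Qed.

Lemma comm_sign_tail k i : 0 < i < 4 ->
  comm_sign k (size (comm_word k) - i) = comm_sign 0 (4 - i).
Proof.
move=> i4; elim: k => // k <-; have L4 := size_comm_word_ge4 k.
rewrite size_comm_word_succ comm_sign_succ; last lia.
by rewrite ifN; [congr comm_sign | rewrite -ltnNge]; lia.
Qed.

Lemma comm_sign0 k : comm_sign k 0 = true.
Proof. by rewrite /comm_sign comm_word_cons. Qed.

Lemma comm_sign1 k : comm_sign k 1 = false.
Proof.
case: k => // k; have L4 := size_comm_word_ge4 k.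
by rewrite comm_sign_succ ?ifT ?comm_sign_tail //; lia.
Qed.

Definition sign_repeat (e0 e1 e2 e3 : bool) := [|| e0 == e1, e1 == e2 | e2 == e3].

Lemma comm_sign_mid k :
  comm_sign k.+1 (size (comm_word k)) = comm_sign k.+1 (size (comm_word k)).+1.
Proof.
have L4 := size_comm_word_ge4 k.
by rewrite !comm_sign_succ ?leqnn ?ltnn ?subnn ?subSnn ?comm_sign0 ?comm_sign1 //; lia.
Qed.

Lemma comm_sign_repeat k q : q + 3 < size (comm_word k) ->
  sign_repeat (comm_sign k q) (comm_sign k q.+1) (comm_sign k q.+2) (comm_sign k q.+3).
Proof.
elim: k q => [|k IHk] q; first by case: q => [|q] //=; rewrite addnC.
rewrite size_comm_word_succ => qL; have := comm_sign_mid k.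
have L4 := size_comm_word_ge4 k; set L := size (comm_word k) in qL L4 *.
have lo p : 0 < p <= L -> comm_sign k.+1 p = ~~ comm_sign k (L - p).
  by move=> pL; rewrite comm_sign_succ ?ifT //; lia.
have hi p : L < p < 2 * L -> comm_sign k.+1 p = comm_sign k (p - L).
  by move=> pL; rewrite comm_sign_succ ?ifN //; lia.
case: (posnP q) => [-> _ | q0 sgL].
  by rewrite /sign_repeat (lo 2) ?(lo 3) ?(comm_sign_tail k (i := 2))
    ?(comm_sign_tail k (i := 3)) ?orbT //; lia.
case: (leqP (q + 3) L) => qlo.
  rewrite !lo; try lia.
  have := IHk (L - q.+3) ltac:(lia).
  have -> : (L - q.+3).+3 = L - q by lia.
  have -> : (L - q.+3).+2 = L - q.+1 by lia.
  have -> : (L - q.+3).+1 = L - q.+2 by lia.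
  by case: (comm_sign k (L - q)) (comm_sign k (L - q.+1)) (comm_sign k (L - q.+2))
    (comm_sign k (L - q.+3)) => [] [] [] [].
case: (ltnP L q) => qhi.
  rewrite !hi; try lia.
  have := IHk (q - L) ltac:(lia).
  have -> : (q - L).+3 = q.+3 - L by lia.
  have -> : (q - L).+2 = q.+2 - L by lia.
  by have -> : (q - L).+1 = q.+1 - L by lia.
(* The remaining windows all contain the repeated positions [L] and [L + 1]. *)
have : q = L - 2 \/ q = L - 1 \/ q = L by lia.
case=> [|[]] ->; last by rewrite /sign_repeat sgL eqxx.
- have -> : (L - 2).+3 = L.+1 by lia.
  have -> : (L - 2).+2 = L by lia.
  by rewrite /sign_repeat sgL eqxx !orbT.
- have -> : (L - 1).+2 = L.+1 by lia.
  have -> : (L - 1).+1 = L by lia.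
  by rewrite /sign_repeat sgL eqxx !orbT.
Qed.

Section CommutatorWord.
Local Open Scope group_scope.
Variables (gT : finGroupType) (s t : gT).

Definition eval_letter (l : bool * bool) : gT :=
  let g := if l.1 then t else s in if l.2 then g else g^-1.

Lemma eval_letter_inv l : eval_letter (letter_inv l) = (eval_letter l)^-1.
Proof. by case: l => [[] []]; rewrite /= ?invgK. Qed.

Lemma prod_comm_word k : \prod_(l <- comm_word k) eval_letter l = icomm s t k.+1.
Proof.
elim: k => [|k IHk]; first by rewrite !big_cons big_nil mulg1 /= !mulgA.
change (icomm s t k.+2) with (s * (icomm s t k.+1)^-1 * s^-1 * icomm s t k.+1).
rewrite -IHk [comm_word k.+1]/= big_cons big_cat -map_rev big_map.
under eq_bigr do rewrite eval_letter_inv.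
rewrite prodgV revK [comm_word k]comm_word_cons big_cons /=.
by rewrite invMg !mulgA mulgKV.
Qed.

Section Turns.
Variable E : gT -> gT -> Prop.
Hypotheses (Esym : forall a b, E a b -> E b a)
  (Etrans : forall a b c, E a b -> E b c -> E a c).

(* Three consecutive turns of a word with alternating letter types relate the
   letters around them; at a repeated sign two of these relations chain. *)
Lemma letter_turns_chain (b e0 e1 e2 e3 : bool) : sign_repeat e0 e1 e2 e3 ->
  E (eval_letter (b, ~~ e0)) (eval_letter (~~ b, e1)) ->
  E (eval_letter (~~ b, ~~ e1)) (eval_letter (b, e2)) ->
  E (eval_letter (b, ~~ e2)) (eval_letter (~~ b, e3)) -> E s t^-1.
Proof.
by case: b e0 e1 e2 e3 => [] [] [] [] [] //= _ E1 E2 E3; eauto 7.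
Qed.

End Turns.
End CommutatorWord.

Section LetterFacts.
Local Open Scope group_scope.
Variables (gT : finGroupType) (s t : gT).
Hypotheses (st : s != t) (stV : s != t^-1).

Lemma eval_letter_types_neq b e e' : eval_letter s t (b, e) != eval_letter s t (~~ b, e').
Proof.
by case: b e e' => [] [] [] /=; rewrite ?eqg_inv ?eqg_invLR ?invgK // eq_sym
  ?eqg_inv ?eqg_invLR ?invgK.
Qed.

Lemma eval_letter_cycle b e : eval_letter s t (b, e) \in <[if b then t else s]>.
Proof. by case: e; rewrite /= ?groupV cycle_id. Qed.

(* A relator of length three puts one generator in the cyclic group of the other. *)
Lemma letter_triple_commute b e0 e1 e2 :
  eval_letter s t (b, e0) * eval_letter s t (~~ b, e1) * eval_letter s t (b, e2) = 1 ->
  commute s t.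
Proof.
set g0 := eval_letter s t (b, e0); set g2 := eval_letter s t (b, e2) => e.
have : eval_letter s t (~~ b, e1) \in <[if b then t else s]>.
  have -> : eval_letter s t (~~ b, e1) = g0^-1 * g2^-1.
    by apply: (mulgI g0); apply: (mulIg g2); rewrite e mulKVg mulVg.
  by rewrite groupM ?groupV ?eval_letter_cycle.
case: b e1 {e g0 g2} => [] []; rewrite /eval_letter /= ?groupV => /cycleP [i ->].
- exact/commute_sym/commuteX.
- exact/commute_sym/commuteX.
- exact: commuteX.
- exact: commuteX.
Qed.

End LetterFacts.

Section CommutatorWalk.
Local Open Scope group_scope.
Variables (gT : finGroupType) (S : {set gT}) (r : nat) (v s t : gT) (m : nat).
Hypotheses (S1 : 1 \notin S) (SV : forall a, a \in S -> a^-1 \in S).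
Hypotheses (sS : s \in S) (tS : t \in S) (st : s != t) (stV : s != t^-1).
(* Of the minimality of [m] only the case of commuting [s], [t] is needed. *)
Hypotheses (m0 : (0 < m)%N) (cm : icomm s t m = 1) (m1 : commute s t -> m = 1%N).
Hypothesis (mr : (2 ^ m.+1 <= r)%N).

Let k := m.-1.
Let L := size (comm_word k).
Let letter p := eval_letter s t (odd p, comm_sign k p).
Let x p := v * \prod_(l <- take p (comm_word k)) eval_letter s t l.

Lemma size_comm_word_pred : L = (2 ^ m.+1)%N.
Proof. by rewrite /L size_comm_word prednK. Qed.

Lemma eval_letter_in l : eval_letter s t l \in S.
Proof. by case: l => [[] []]; rewrite /= ?SV. Qed.

Lemma eval_letter_neq1 l : eval_letter s t l != 1.
Proof. by apply: contraNneq S1 => <-; apply: eval_letter_in. Qed.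

Lemma comm_walk_succ p : (p < L)%N -> x p.+1 = x p * letter p.
Proof.
move=> pL; rewrite /x (take_nth (false, true)) // big_rcons mulgA; congr (_ * _).
by rewrite /letter /comm_sign -(comm_word_type (false, true) pL); case: nth.
Qed.

Lemma comm_walk0 : x 0 = v.
Proof. by rewrite /x take0 big_nil mulg1. Qed.

Lemma comm_walk_closed : x L = v.
Proof. by rewrite /x take_size prod_comm_word prednK // cm mulg1. Qed.

Lemma comm_walk_step p : (p < L)%N -> x p.+1 != x p.
Proof.
by move=> pL; rewrite comm_walk_succ // -{2}(mulg1 (x p)) (inj_eq (mulgI _)) eval_letter_neq1.
Qed.

Lemma walkf_comm_walk : walkf S L x.
Proof.
move=> p pL; rewrite /cay eq_sym comm_walk_step //=.
by rewrite comm_walk_succ // mulKg eval_letter_in.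
Qed.

Lemma comm_walk_no_short_cycle i d : (0 < d <= 3)%N -> (i + d <= L)%N -> x (i + d) != x i.
Proof.
case: d => [|[|[|[|d]]]] // _ idL.
- by rewrite addn1 comm_walk_step //; lia.
- rewrite addn2 !comm_walk_succ; try lia.
  rewrite -mulgA -{2}(mulg1 (x i)) (inj_eq (mulgI _)) -eq_invg_mul -eval_letter_inv.
  by rewrite /letter oddS; apply: eval_letter_types_neq.
apply/eqP => e3; have := e3; rewrite addn3 !comm_walk_succ; try lia.
rewrite -2!mulgA => /(canRL (mulKg _)); rewrite mulVg !mulgA /letter !oddS negbK.
move=> /letter_triple_commute /m1 m_1.
have L4 : L = 4%N by rewrite size_comm_word_pred m_1.
have x4 : x 4 = v by rewrite -L4 comm_walk_closed.
have [i0 | i1] : i = 0%N \/ i = 1%N by lia.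
- rewrite i0 in e3; move: (comm_walk_step (p := 3)).
  rewrite x4 -comm_walk0 -e3 eqxx L4.
  by move/(_ isT).
- rewrite i1 in e3; move: (comm_walk_step (p := 0)).
  rewrite comm_walk0 -x4 -e3 eqxx L4.
  by move/(_ isT).
Qed.

Lemma comm_walk_turn c : (0 < c < L)%N -> ball_conn S r (x c) (x c.-1) (x c.+1) ->
  ball_conn S r v (v * (letter c.-1)^-1) (v * letter c).
Proof.
move=> /andP [c0 cL]; have xc : x c.-1 = x c * (letter c.-1)^-1.
  by rewrite -[in x c](prednK c0) comm_walk_succ ?mulgK //; lia.
by rewrite comm_walk_succ // xc; apply: ball_conn_shift.
Qed.

Lemma comm_walk_ball_conn : ball_conn S r v (v * s) (v * t^-1).
Proof.
have L4 := size_comm_word_ge4 k; have Lr : (L <= r)%N by rewrite size_comm_word_pred.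
have xL : x L = x 0 by rewrite comm_walk0 comm_walk_closed.
have [i [d [d0 idL xid xinj]]] := min_repeat_window (L := L) ltac:(lia) xL.
have d3 : (3 < d)%N.
  rewrite ltnNge; apply/negP => d3.
  by move: (comm_walk_no_short_cycle (i := i) (d := d)); rewrite d0 d3 idL xid eqxx => /(_ isT isT).
have turn c : (0 < c < d)%N -> ball_conn S r v (v * (letter (i + c).-1)^-1) (v * letter (i + c)).
  move=> cd; apply: comm_walk_turn; first lia.
  rewrite -addnS -subn1 -addnBA ?subn1; last by case/andP: cd.
  apply: (cycle_turn_conn (y := fun l => x (i + l)) _ _ _ xinj cd) => /=; last lia.
  - by move=> l ld; rewrite addnS; apply: walkf_comm_walk; lia.
  - by rewrite addn0.
have := turn 1%N; have := turn 2; have := turn 3.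
rewrite /letter !addnS !addn0 /= -!eval_letter_inv /letter_inv /= !negbK => t3 t2 t1.
apply: (letter_turns_chain (E := fun a b => ball_conn S r v (v * a) (v * b)) _ _
  (comm_sign_repeat (q := i) _) (t1 _) (t2 _) (t3 _)); try lia.
- by move=> a b; apply: ball_conn_sym.
- by move=> a b c; apply: ball_conn_trans.
Qed.

End CommutatorWalk.

Section LocalCutvertex.
Local Open Scope group_scope.
Variables (gT : finGroupType) (S : {set gT}) (r : nat).
Hypotheses (S1 : 1 \notin S) (SV : forall a, a \in S -> a^-1 \in S).

Lemma nil_class_ball_conn (n : nat) v s t : (0 < n)%N -> nil_class_le gT n -> (2 ^ n.+1 <= r)%N ->
  s \in S -> t \in S -> s != t -> s != t^-1 -> ball_conn S r v (v * s) (v * t^-1).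
Proof.
move=> n0 nc nr sS tS st stV.
have ex_m : exists m, (0 < m)%N && (icomm s t m == 1) by exists n; rewrite n0 nc ?eqxx.
case: (ex_minnP ex_m) => m /andP [m0 /eqP cm] mmin.
apply: (comm_walk_ball_conn v S1 SV sS tS st stV m0 cm).
- move=> cst; apply/eqP; rewrite eqn_leq m0 andbT mmin //=.
  by rewrite (commuteV cst) mulgK mulVg.
- by apply: leq_trans nr; rewrite leq_exp2l // ltnS mmin // n0 nc ?eqxx.
Qed.

Lemma nil_class_neighbours_conn (n : nat) v s t : (0 < n)%N -> nil_class_le gT n ->
    (2 ^ n.+1 <= r)%N -> s \in S -> t \in S -> s != t -> s != t^-1 ->
  forall a b, a \in S -> b \in S -> ball_conn S r v (v * a) (v * b).
Proof.
move=> n0 nc nr sS tS st stV.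
have link a b : a \in S -> b \in S -> a != b^-1 -> a != b -> ball_conn S r v (v * a) (v * b).
  by move=> aS bS ab abV; rewrite -[b]invgK; apply: (nil_class_ball_conn _ n0 nc nr); rewrite ?invgK ?SV.
move=> a b aS bS; case: (eqVneq a b) => [-> | ab]; first exact: rt_refl.
case: (eqVneq a b^-1) => [abV | abV]; last exact: link.
(* For [b = a^-1], pass through a generator [u] other than [a] and [a^-1]. *)
have [u [uS ua uaV]] : exists u, [/\ u \in S, u != a & u != a^-1].
  case: (eqVneq s a) => [sa | sa]; last case: (eqVneq s a^-1) => [saV | saV]; last by exists s.
  - by exists t; rewrite -sa; split; rewrite // eq_sym ?eqg_invLR.
  - have -> : a = s^-1 by rewrite saV invgK.
    by exists t; rewrite invgK; split; rewrite // eq_sym ?eqg_invLR.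
apply: (ball_conn_trans (y := v * u)).
- by apply: link; rewrite // eq_sym ?eqg_invLR.
- have -> : b = a^-1 by rewrite abV invgK.
  by apply: link; rewrite ?invgK ?SV.
Qed.

Lemma nil_class_no_local_cutvertex (n : nat) v s t : (0 < n)%N -> nil_class_le gT n ->
    (2 ^ n.+1 <= r)%N -> s \in S -> t \in S -> s != t -> s != t^-1 ->
  ~ local_cutvertex S r v.
Proof.
move=> n0 nc nr sS tS st stV [x [y [xB xv yB yv []]]].
have [a aS ax] := ball_vertex_conn_neighbour xB xv.
have [b bS b_y] := ball_vertex_conn_neighbour yB yv.
apply: ball_conn_trans (ball_conn_sym ax) (ball_conn_trans _ b_y).
exact: (nil_class_neighbours_conn v n0 nc nr sS tS st stV).
Qed.

Section CyclicGenerators.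
Variable a : gT.
Hypotheses (aS : a \in S) (Sa : forall u, u \in S -> u = a \/ u = a^-1).
Hypothesis genS : <<S>> = [set: gT].

Lemma cycle_gen_setT : <[a]> = [set: gT].
Proof.
apply/eqP; rewrite eqEsubset subsetT -genS gen_subG.
by apply/subsetP => u /Sa [] ->; rewrite ?groupV cycle_id.
Qed.

Lemma order_gen : #[a] = #|gT|.
Proof. by rewrite -cardsT -cycle_gen_setT. Qed.

Lemma card_gen_inv_le2 : a = a^-1 -> (#|gT| <= 2)%N.
Proof.
move=> aa; rewrite -order_gen dvdn_leq //.
by rewrite order_dvdn expgS expg1 {2}aa mulgV.
Qed.

Lemma cay_gen g : cay S g (g * a).
Proof.
rewrite /cay -{1}(mulg1 g) (inj_eq (mulgI _)) mulKg aS andbT eq_sym.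
by apply: contraNneq S1 => <-.
Qed.

Lemma cay_gen_inv g : cay S g (g * a^-1).
Proof.
rewrite /cay -{1}(mulg1 g) (inj_eq (mulgI _)) mulKg SV // andbT eq_sym invg_eq1.
by apply: contraNneq S1 => <-.
Qed.

Lemma local_cutvertex_order_gt v : local_cutvertex S r v -> (r < #|gT|)%N.
Proof.
move=> [x [y [_ xv _ yv nconn]]]; rewrite ltnNge; apply/negP => Gr; apply: nconn.
pose f k := v * a ^+ k.
have wf : walkf S #[a] f by move=> k _; rewrite /f expgSr mulgA cay_gen.
have fN : f #[a] = f 0 by rewrite /f expg_order expg0.
have fv k : (0 < k < #[a])%N -> f k != v.
  move=> /andP [k0 ka]; rewrite /f -{2}(mulg1 v) (inj_eq (mulgI _)) -order_dvdn.
  by apply/negP => /(dvdn_leq k0); rewrite leqNgt ka.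
have fP z : z != v -> exists2 i, (0 < i < #[a])%N & z = f i.
  move=> zv; have /cyclePmin [i ia zi] : v^-1 * z \in <[a]> by rewrite cycle_gen_setT inE.
  exists i; last by rewrite /f -zi mulKVg.
  by rewrite ia andbT lt0n; apply: contraNneq zv => i0; rewrite -(mulKVg v z) zi i0 mulg1.
have [i ia ->] := fP x xv; have [j ja ->] := fP y yv.
have conn_f p q : (0 < p <= q)%N -> (q < #[a])%N -> ball_conn S r v (f p) (f q).
  move=> /andP [p0 pq] qa; have f0 : f 0 = v by rewrite /f mulg1.
  rewrite -f0; apply: (ball_conn_walkf wf fN); first by rewrite order_gen.
    by rewrite pq ltnW.
  by move=> l /andP [pl lq]; rewrite f0 fv // (leq_trans p0 pl) (leq_ltn_trans lq qa).
case/andP: ia => i0 ia; case/andP: ja => j0 ja.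
case: (leqP i j) => ij; first by apply: conn_f; rewrite ?i0.
by apply: ball_conn_sym; apply: conn_f; rewrite ?j0 ?(ltnW ij).
Qed.

Lemma cay_is_cycle_gen : a != a^-1 -> cay_is_cycle S.
Proof.
move=> aaV; split=> [x y | x].
  have /cycleP [i yi] : x^-1 * y \in <[a]> by rewrite cycle_gen_setT inE.
  rewrite -(mulKVg x y) yi {yi}; elim: i => [|i IHi]; first by rewrite expg0 mulg1 connect0.
  by apply: connect_trans IHi (connect1 _); rewrite expgSr mulgA cay_gen.
have -> : [set y | cay S x y] = [set x * a; x * a^-1].
  apply/setP => y; rewrite !inE; apply/idP/orP => [/andP [_ /Sa [] <-] | [] /eqP ->].
  - by left; rewrite mulKVg.
  - by right; rewrite mulKVg.
  - exact: cay_gen.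
  - exact: cay_gen_inv.
by rewrite cards2 (inj_eq (mulgI _)) aaV.
Qed.

End CyclicGenerators.
End LocalCutvertex.

Theorem theorem4p1 (gT : finGroupType) (S : {set gT}) (n r : nat) :
  generating_set S -> (0 < n)%N -> nil_class_le gT n -> (2 ^ n.+1 <= r)%N ->
  (exists v : gT, local_cutvertex S r v) ->
  [/\ cay_is_cycle S, (r < #|gT|)%N & cyclic [set: gT]].
Proof.
case=> S1 SV genS n0 nc nr [v cut].
case: (boolP [exists s, exists t, [&& s \in S, t \in S, s != t & s != t^-1]%g]).
  case/existsP=> s /existsP [t /and4P [sS tS st stV]].
  by case: (nil_class_no_local_cutvertex S1 SV n0 nc nr sS tS st stV cut).
move=> /existsPn indep.
have [a aS _] : exists2 a, a \in S & true.
  case: cut => x [y [xB xv _ _ _]].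
  by have [a aS _] := ball_vertex_conn_neighbour xB xv; exists a.
have Sa u : u \in S -> u = a \/ u = a^-1%g.
  move=> uS; move/existsPn: (indep u) => /(_ a); rewrite uS aS /= negb_and !negbK.
  by case/orP => /eqP; [left | right].
have Gr := local_cutvertex_order_gt S1 aS Sa genS cut.
have aaV : a != a^-1%g.
  apply: contraTneq Gr => /(card_gen_inv_le2 Sa genS) G2; rewrite -leqNgt.
  by apply: leq_trans G2 (leq_trans _ nr); rewrite expnS leq_pmulr ?expn_gt0.
split=> //; first exact: (cay_is_cycle_gen S1 SV aS Sa genS).
by apply/cyclicP; exists a; rewrite (cycle_gen_setT Sa genS).
Qed.
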